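(* Let $d\ge2$, $p_c(\mathbb{Z}^d)<p\le 1$, and let $c_1,c_2,c_3,c_4,c_5>0$. There exists a constant $C=C(c_1,c_2,c_3,c_4,c_5,d,p)>0$ such that for every $n$, every $\omega\in H_n(c_1,c_2,c_3,c_4,c_5)$ and every edge $e\in\mathbb{E}_d(n)$, \[ |\phi(n)(\omega)-\phi(n)(\omega^e)|\le \frac{C}{n^d}. \]
   Context: Let $\mathbb{T}^d(n)=\mathbb{Z}^d/n\mathbb{Z}^d$ with edge set $\mathbb{E}_d(n)$, $\Omega=\{0,1\}^{\mathbb{E}_d(n)}$ with the Bernoulli($p$) product measure; $e$ is open in $\omega$ if $\omega(e)=1$. $C_d(n)(\omega)$ is the largest open connected component (ties broken by a fixed deterministic rule). For $e\in\mathbb{E}_d(n)$, $\omega^e$ agrees with $\omega$ off $e$ and $\omega^e(e)=1-\omega(e)$. For a nonempty vertex set $A\subset C_d(n)(\eta)$, $\psi_A(\eta)=|\partial A(\eta)|/|A|$ where $\partial A(\eta)$ is the set of edges open in $\eta$ with exactly one endpoint in $A$; the Cheeger constant is $\phi(n)(\eta)=\min\{\psi_A(\eta):\emptyset\ne A\subset C_d(n)(\eta),\ |A|\le|C_d(n)(\eta)|/2\}$; such $A$ are called admissible for $\eta$. Define the events $H^1_n(c_1)=\{|C_d(n)(\omega)|>c_1n^d\}$; $H^2_n(c_2,c_3)=\{c_2/n<\phi(n)(\omega)<c_3/n\}$; $H^3_n=\{\forall e\in\mathbb{E}_d(n):\ |C_d(n)(\omega)\triangle C_d(n)(\omega^e)|\le\sqrt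 n\}$; $H^4_n(c_4)=\{\exists A$ admissible for $\omega$ with $|A|>c_4n^d$ and $\psi_A(\omega)=\phi(n)(\omega)\}$; $H^5_n(c_5)=\{\forall e\in\mathbb{E}_d(n)\ \exists A$ admissible for $\omega^e$ with $|A|>c_5n^d$ and $\psi_A(\omega^e)=\phi(n)(\omega^e)\}$; and $H_n(c_1,\dots,c_5)=H^1_n(c_1)\cap H^2_n(c_2,c_3)\cap H^3_n\cap H^4_n(c_4)\cap H^5_n(c_5)$. *)

From HB Require Import structures.
From mathcomp Require Import all_boot all_order all_algebra.
Set Implicit Arguments. Unset Strict Implicit. Unset Printing Implicit Defensive.
Import Order.TTheory GRing.Theory Num.Theory.

Section Torus.
Variables n d : nat.

(* Vertices of T^d(n) = Z^d / nZ^d : functions 'I_d -> 'I_n (coordinates mod n). *)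
Definition vtx := {ffun 'I_d -> 'I_n}.

Definition nbr (x y : vtx) : bool :=
  [exists i : 'I_d, (val (y i) == (val (x i)).+1 %% n) &&
                    [forall j : 'I_d, (j != i) ==> (y j == x j)]].

Definition is_edge (f : {set vtx}) : bool :=
  [exists x : vtx, exists y : vtx, [&& f == [set x; y], nbr x y & x != y]].

Definition edge := {f : {set vtx} | is_edge f}.

(* configurations omega in {0,1}^{E_d(n)}; omega f = true means f is open *)
Definition config := {ffun edge -> bool}.

Definition flip (w : config) (e : edge) : config :=
  [ffun f => if f == e then ~~ w f else w f].

Definition oadj (w : config) : rel vtx :=
  fun x y => [exists f : edge, w f && (val f == [set x; y])].

Definition cluster (w : config) (x : vtx) : {set vtx} :=
  [set y | connect (oadj w) x y].

(* LC is a (deterministic) rule selecting a largest open cluster *)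
Definition largest_cluster_rule (LC : config -> {set vtx}) : Prop :=
  forall w, (exists x, LC w = cluster w x) /\
            (forall x, #|cluster w x| <= #|LC w|)%N.

Definition bd (w : config) (A : {set vtx}) : {set edge} :=
  [set f : edge | w f && (#|val f :&: A| == 1)%N].

Definition admissible (LC : config -> {set vtx}) (w : config) (A : {set vtx}) : bool :=
  [&& A != set0, A \subset LC w & (#|A|.*2 <= #|LC w|)%N].

Variable R : realFieldType.
Local Open Scope ring_scope.

Definition psi (w : config) (A : {set vtx}) : R := (#|bd w A|)%:R / (#|A|)%:R.

(* Cheeger constant: minimum of psi over admissible sets (0 if there are none,
   a case that never occurs under the hypotheses of the theorem). *)
Definition phi (LC : config -> {set vtx}) (w : config) : R :=
  match [pick A | admissible LC w A] with
  | Some A0 => \big[Num.min/psi w A0]_(A | admissible LC w A) psi w A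
  | None => 0
  end.

Definition H1 (LC : config -> {set vtx}) (c1 : R) (w : config) : Prop :=
  c1 * (n ^ d)%:R < (#|LC w|)%:R.
Definition H2 (LC : config -> {set vtx}) (c2 c3 : R) (w : config) : Prop :=
  c2 / n%:R < phi LC w /\ phi LC w < c3 / n%:R.
(* |C(w) Δ C(w^e)| <= sqrt n, written as |.|^2 <= n *)
Definition H3 (LC : config -> {set vtx}) (w : config) : Prop :=
  forall e : edge,
    ((#|(LC w :\: LC (flip w e)) :|: (LC (flip w e) :\: LC w)|) ^ 2 <= n)%N.
Definition H4 (LC : config -> {set vtx}) (c4 : R) (w : config) : Prop :=
  exists A, [/\ admissible LC w A, c4 * (n ^ d)%:R < (#|A|)%:R & psi w A = phi LC w].
Definition H5 (LC : config -> {set vtx}) (c5 : R) (w : config) : Prop :=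
  forall e : edge, exists A,
    [/\ admissible LC (flip w e) A, c5 * (n ^ d)%:R < (#|A|)%:R
      & psi (flip w e) A = phi LC (flip w e)].
Definition Hn (LC : config -> {set vtx}) (c1 c2 c3 c4 c5 : R) (w : config) : Prop :=
  [/\ H1 LC c1 w, H2 LC c2 c3 w, H3 LC w, H4 LC c4 w & H5 LC c5 w].

End Torus.

From HB Require Import structures.
From mathcomp Require Import all_boot all_order all_algebra.
From mathcomp Require Import lra zify.
Import Order.TTheory GRing.Theory Num.Theory.
Set Implicit Arguments. Unset Strict Implicit. Unset Printing Implicit Defensive.

(* Of the two configurations w and w^e, call v the one in which e is open and
   u the one in which it is closed; every edge open in u is open in v.
   1. Open clusters grow with the configuration (cluster_mono), so as soon as
      the largest clusters LC u and LC v meet, LC u is contained in LC v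
      (largest_cluster_nested).
   2. Opening e: a u-admissible set A stays v-admissible and gains at most one
      boundary edge, hence phi v <= psi u A + 1/|A| (phi_add_edge).
   3. Closing e: a v-admissible set A is traced on LC u, as A :&: LC u or as
      LC u :\: A; its u-boundary lies in the v-boundary of A and at most
      k = |LC v :\: LC u| vertices are lost (admissible_trace), hence
      phi u <= phi v * (1 + 2k/|A|) (phi_remove_edge, via ratio_shift).
   4. For the optimal sets given by H4 and H5, of more than c n^d vertices with
      c = min c4 c5, this yields
      |phi w - phi w^e| <= (1 + 2 (phi w + 1/(c n^d)) k) / (c n^d) (phi_flip_bound).
   5. If c n >= 2, H3 gives k <= n and k small against c n^d, and H2 gives
      phi w <= c3/n, so the bound is C1/n^d (change_bound_large).  If c n < 2
      the torus has at most (2/c)^d vertices and the crude bound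
      phi <= (n^d)^2 + 1 suffices (change_bound_small). *)

Definition symdiff (T : finType) (A B : {set T}) : {set T} := (A :\: B) :|: (B :\: A).

Lemma symdiffC (T : finType) (A B : {set T}) : symdiff A B = symdiff B A.
Proof. exact: setUC. Qed.

Section Clusters.
Variables n d : nat.
Local Notation V := (vtx n d).
Local Notation E := (edge n d).
Local Notation cfg := (config n d).

Definition subconfig (u v : cfg) : Prop := forall f, u f -> v f.

Lemma edge_ends (f : E) : exists a b : V, val f = [set a; b] /\ a != b.
Proof.
case: f => f /= /existsP [a /existsP [b /and3P [/eqP -> _ hab]]].
by exists a, b.
Qed.

Lemma card_edge (f : E) : #|val f| = 2.
Proof. by have [a [b [-> hab]]] := edge_ends f; rewrite cards2 hab. Qed.

(* An edge is determined by a pair of endpoints, so there are at most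
   |V|^2 + 1 edges; this bounds the Cheeger constant on small tori. *)
Lemma card_edges_le : #|{: E}| <= (#|{: V}| ^ 2).+1.
Proof.
pose ends (f : E) := [pick p : V * V | val f == [set p.1; p.2]].
have endsP f : exists p, ends f = Some p /\ val f = [set p.1; p.2].
  rewrite /ends; case: pickP => [p /eqP hp|none]; first by exists p.
  have [a [b [hf _]]] := edge_ends f.
  by move: (none (a, b)); rewrite /= hf eqxx.
have ends_inj : injective ends.
  move=> f1 f2 e12; apply: val_inj.
  have [p1 [g1 v1]] := endsP f1; have [p2 [g2 v2]] := endsP f2.
  by move: e12; rewrite g1 g2 v1 v2 => [[->]].
by have := leq_card ends ends_inj; rewrite card_option card_prod mulnn.
Qed.

Lemma oadj_sym (u : cfg) : symmetric (oadj u).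
Proof.
move=> x y; apply/existsP/existsP => -[f /andP [uf /eqP hf]];
  by exists f; rewrite uf hf setUC eqxx.
Qed.

Lemma open_edge_connect (u : cfg) (f : E) x y :
  u f -> x \in val f -> y \in val f -> connect (oadj u) x y.
Proof.
move=> uf hx hy; have [a [b [hf _]]] := edge_ends f.
have adj_ab : oadj u a b by apply/existsP; exists f; rewrite uf hf eqxx.
have adj_ba : oadj u b a by rewrite oadj_sym.
move: hx hy; rewrite hf !inE => /orP [] /eqP -> /orP [] /eqP ->;
  by [exact: connect0 | exact: connect1 adj_ab | exact: connect1 adj_ba].
Qed.

Lemma open_edge_in_cluster (u : cfg) z (f : E) x :
  u f -> x \in val f -> x \in cluster u z -> val f \subset cluster u z.
Proof.
move=> uf hx hzx; apply/subsetP => y hy; rewrite !inE in hzx *.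
exact: connect_trans hzx (open_edge_connect uf hx hy).
Qed.

Lemma cluster_mono (u v : cfg) x y :
  subconfig u v -> cluster u x :&: cluster v y != set0 ->
  cluster u x \subset cluster v y.
Proof.
move=> uv /set0Pn [z]; rewrite !inE => /andP [hxz hyz].
have conn_uv : subrel (connect (oadj u)) (connect (oadj v)).
  apply: connect_sub => a b /existsP [f /andP [uf hf]].
  by apply: connect1; apply/existsP; exists f; rewrite uv.
rewrite (sym_connect_sym (oadj_sym u)) in hxz.
apply/subsetP => t; rewrite !inE => hxt.
exact: connect_trans hyz (conn_uv _ _ (connect_trans hxz hxt)).
Qed.

Lemma bd_edge_in_cluster (u : cfg) z (B : {set V}) (f : E) :
  B \subset cluster u z -> f \in bd u B -> val f \subset cluster u z.
Proof.
move=> sB; rewrite inE => /andP [uf /eqP hc].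
have /card_gt0P [x] : 0 < #|val f :&: B| by rewrite hc.
rewrite inE => /andP [hxf hxB].
exact: open_edge_in_cluster uf hxf (subsetP sB x hxB).
Qed.

Lemma bd_trace_in (u v : cfg) z A :
  subconfig u v -> bd u (A :&: cluster u z) \subset bd v A.
Proof.
move=> uv; apply/subsetP => f hf.
have sf := bd_edge_in_cluster (subsetIr A _) hf.
move: hf; rewrite !inE => /andP [uf hc]; rewrite uv //=.
by rewrite setIA (setIidPl (subset_trans (subsetIl _ _) sf)) in hc.
Qed.

Lemma bd_trace_out (u v : cfg) z A :
  subconfig u v -> bd u (cluster u z :\: A) \subset bd v A.
Proof.
move=> uv; apply/subsetP => f hf.
have sf := bd_edge_in_cluster (subsetDl _ A) hf.
move: hf; rewrite !inE => /andP [uf /eqP hc]; rewrite uv //=.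
have out1 : #|val f :\: A| = 1.
  by rewrite -hc setDE [cluster u z :\: A]setDE setIA (setIidPl sf).
have := cardsID A (val f); rewrite card_edge out1.
by move/eqP; rewrite -[2]/(1 + 1) eqn_add2r.
Qed.

Lemma bd_add_edge (u v : cfg) (e : E) B :
  (forall f, v f -> f != e -> u f) -> #|bd v B| <= #|bd u B| + 1.
Proof.
move=> vu; apply: (leq_trans (n := #|bd u B :|: [set e]|)).
  apply/subset_leq_card/subsetP => f; rewrite !inE => /andP [vf hc].
  by case: (eqVneq f e) => [_|fe]; rewrite ?orbT // orbF vu.
by apply: leq_trans (leq_card_setU _ _) _; rewrite cards1.
Qed.

(* Largest clusters of comparable configurations are nested once they meet. *)
Lemma largest_cluster_nested (LC : cfg -> {set V}) (u v : cfg) :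
  largest_cluster_rule LC -> subconfig u v ->
  #|LC u :\: LC v| < #|LC u| -> LC u \subset LC v.
Proof.
move=> hLC uv hlt; have [x hx] := (hLC u).1; have [y hy] := (hLC v).1.
rewrite hx hy; apply: cluster_mono uv _; rewrite -hx -hy -card_gt0.
by have := cardsID (LC v) (LC u); lia.
Qed.

Lemma card_vtx : #|{: V}| = n ^ d.
Proof. by rewrite card_ffun !card_ord. Qed.

Lemma flip_off (w : cfg) (e f : edge n d) : f != e -> flip w e f = w f.
Proof. by move=> fe; rewrite ffunE (negbTE fe). Qed.

Lemma flip_closed_below (w : cfg) (e : edge n d) : w e -> subconfig (flip w e) w.
Proof. by move=> we f; rewrite ffunE; case: eqVneq => [->|]. Qed.

Lemma flip_opened_above (w : cfg) (e : edge n d) : ~~ w e -> subconfig w (flip w e).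
Proof. by move=> /negbTE we f; rewrite ffunE; case: eqVneq => [->|]; rewrite ?we. Qed.

Lemma admissible_grow (LC : cfg -> {set V}) (u v : cfg) A :
  LC u \subset LC v -> admissible LC u A -> admissible LC v A.
Proof.
move=> sub /and3P [A0 Au Ahalf]; apply/and3P; split=> //.
  exact: subset_trans Au sub.
exact: leq_trans Ahalf (subset_leq_card sub).
Qed.

(* A [v]-admissible set traced on the smaller largest cluster [LC u] yields a
   [u]-admissible set with no more boundary and at most |LC v :\: LC u| fewer
   vertices: take [A :&: LC u] if it is at most half of [LC u], and its
   complement [LC u :\: A] otherwise. *)
Lemma admissible_trace (LC : cfg -> {set V}) (u v : cfg) z A :
  subconfig u v -> LC u = cluster u z -> LC u \subset LC v ->
  admissible LC v A -> #|LC v :\: LC u| < #|A| ->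
  exists B, [/\ admissible LC u B, #|bd u B| <= #|bd v A|
              & #|A| <= #|B| + #|LC v :\: LC u|].
Proof.
move=> uv hz sub /and3P [A0 Av Ahalf] hlt.
have tr_in := bd_trace_in z A uv; have tr_out := bd_trace_out z A uv.
rewrite -hz in tr_in tr_out; move: tr_in tr_out sub Av Ahalf hlt.
set S := LC u; set T := LC v; set k := #|T :\: S| => tr_in tr_out sub Av Ahalf hlt.
have cardT : #|T| = #|S| + k.
  by rewrite /k cardsD (setIidPr sub) subnKC // subset_leq_card.
have lostA : #|A| <= #|A :&: S| + k.
  by rewrite -(cardsID S A) leq_add2l subset_leq_card // setSD.
have AS_le : #|A :&: S| <= #|A| by rewrite subset_leq_card // subsetIl.
have cardSA : #|S :\: A| = #|S| - #|A :&: S| by rewrite cardsD setIC.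
rewrite /admissible -/S.
case: (leqP (#|A :&: S|).*2 #|S|) => hhalf.
- exists (A :&: S); split; [|exact: subset_leq_card|by []].
  by apply/and3P; split; rewrite ?subsetIr // -card_gt0; lia.
- exists (S :\: A); split; [|exact: subset_leq_card|by rewrite cardSA; lia].
  by apply/and3P; split; rewrite ?subsetDl // -?card_gt0 cardSA; lia.
Qed.

End Clusters.

Section Cheeger.
Variables (n d : nat) (R : realFieldType).
Local Notation V := (vtx n d).
Local Notation cfg := (config n d).
Local Open Scope ring_scope.

Lemma psi_ge0 (w : cfg) A : 0 <= psi R w A.
Proof. by rewrite /psi divr_ge0 ?ler0n. Qed.

Lemma phi_le_psi (LC : cfg -> {set V}) (w : cfg) A :
  admissible LC w A -> phi R LC w <= psi R w A.
Proof.
move=> hA; rewrite /phi; case: pickP => [A0 _|none]; last by have := none A; rewrite hA.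
exact: bigmin_le_cond.
Qed.

Lemma phi_ge0 (LC : cfg -> {set V}) (w : cfg) : 0 <= phi R LC w.
Proof.
rewrite /phi; case: pickP => [A0 _|//].
by apply: le_bigmin => [|A _]; exact: psi_ge0.
Qed.

Lemma phi_le_card_edges (LC : cfg -> {set V}) (w : cfg) :
  phi R LC w <= #|{: edge n d}|%:R.
Proof.
rewrite /phi; case: pickP => [A0 hA0|_]; last exact: ler0n.
apply: (le_trans (y := psi R w A0)); first exact: bigmin_le_cond.
rewrite /psi.
have A0_gt0 : (0 < #|A0|)%N by case/and3P: hA0; rewrite card_gt0.
rewrite ler_pdivrMr ?ltr0n // -natrM ler_nat.
by rewrite (leq_trans (max_card _)) // leq_pmulr.
Qed.

Lemma phi_le_torus (LC : cfg -> {set V}) (w : cfg) :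
  phi R LC w <= (n ^ d)%:R ^+ 2 + 1.
Proof.
apply: le_trans (phi_le_card_edges LC w) _.
by rewrite -natrX natr1 ler_nat -(card_vtx n d) card_edges_le.
Qed.

Lemma phi_add_edge (LC : cfg -> {set V}) (u v : cfg) (e : edge n d) A :
  (forall f, v f -> f != e -> u f) -> LC u \subset LC v -> admissible LC u A ->
  phi R LC v <= psi R u A + #|A|%:R^-1.
Proof.
move=> vu sub hA; apply: le_trans (phi_le_psi (admissible_grow sub hA)) _.
rewrite /psi -[X in _ <= _ + X]mul1r -mulrDl ler_wpM2r ?invr_ge0 ?ler0n //.
by rewrite natr1 ler_nat -addn1 (bd_add_edge _ vu).
Qed.

End Cheeger.

Local Open Scope ring_scope.

(* Losing at most [k] vertices and no boundary changes a ratio y/a by a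
   relative amount at most 2k/b, provided 2k <= b <= a. *)
Lemma ratio_shift (R : realFieldType) (x y z a b k : R) :
  0 <= x <= y -> 0 <= k -> 0 < b <= a -> 2 * k <= b -> a <= z + k ->
  x / z <= y / a + 2 * (y / a) * k / b.
Proof.
move=> /andP [x0 xy] k0 /andP [b0 ba] kb az.
have a0 : 0 < a by apply: lt_le_trans ba.
have z0 : 0 < z by lra.
set p := y / a.
have p0 : 0 <= p by rewrite divr_ge0 ?(le_trans x0 xy) ?ltW.
have yE : y = p * a by rewrite /p divfK ?gt_eqF.
have pa : p * a <= p * z + p * k by rewrite -mulrDr ler_wpM2l.
have pk : p * k <= 2 * p * k / b * z.
  rewrite -mulrA [b^-1 * z]mulrC mulrA ler_pdivlMr //.
  have pk0 : 0 <= p * k by rewrite mulr_ge0.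
  nra.
by rewrite ler_pdivrMr // mulrDl; lra.
Qed.

(* The constant in the regime c n >= 2, where k <= n <= n^d. *)
Lemma change_bound_large (R : realFieldType) (p k m N c c3 : R) :
  0 < c -> 0 < m -> 0 <= k <= m -> m <= N -> 0 <= p <= c3 / m ->
  (1 + 2 * (p + (c * N)^-1) * k) / (c * N) <= (1 + 2 * (c3 + c^-1)) / c / N.
Proof.
move=> c0 m0 /andP [k0 km] mN /andP [p0 pc3].
have N0 : 0 < N by apply: lt_le_trans mN.
have pk : p * k <= c3.
  apply: le_trans (ler_wpM2l p0 km) _.
  by rewrite -ler_pdivlMr.
have Nk : (c * N)^-1 * k <= c^-1.
  rewrite invfM -mulrA ler_piMr ?invr_ge0 ?(ltW c0) //.
  by rewrite mulrC ler_pdivrMr // mul1r (le_trans km mN).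
rewrite -[_ / c / N]mulrA -invfM ler_pM2r ?invr_gt0 ?mulr_gt0 //; lra.
Qed.

(* The constant in the regime n^d <= M. *)
Lemma change_bound_small (R : realFieldType) (N M : R) :
  0 < N -> N <= M -> N ^+ 2 + 1 <= M * (M ^+ 2 + 1) / N.
Proof.
move=> N0 NM; rewrite ler_pdivlMr // mulrC.
have M0 : 0 <= M := le_trans (ltW N0) NM.
have sq : N ^+ 2 + 1 <= M ^+ 2 + 1.
  by rewrite lerD2r; apply: lerXn2r; rewrite ?nnegrE // ltW.
by apply: ler_pM; rewrite ?addr_ge0 ?exprn_ge0 // ltW.
Qed.

Section Perturbation.
Variables (n d : nat) (R : realFieldType) (LC : config n d -> {set vtx n d}).
Local Notation cfg := (config n d).

Lemma phi_remove_edge (u v : cfg) z A (b : R) :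
  subconfig u v -> LC u = cluster u z -> LC u \subset LC v ->
  admissible LC v A -> psi R v A = phi R LC v ->
  0 < b <= #|A|%:R -> 2 * #|LC v :\: LC u|%:R <= b ->
  phi R LC u <= phi R LC v + 2 * phi R LC v * #|LC v :\: LC u|%:R / b.
Proof.
move=> uv hz sub hA hpsi hb kb.
have lost_lt : (#|LC v :\: LC u| < #|A|)%N.
  rewrite -(ltr_nat R); case/andP: hb => ? ?.
  by have := ler0n R #|LC v :\: LC u|; lra.
have [B [hB bdB cardB]] := admissible_trace uv hz sub hA lost_lt.
apply: le_trans (phi_le_psi R hB) _; rewrite -hpsi /psi.
by apply: ratio_shift; rewrite ?ler0n ?ler_nat -?natrD ?ler_nat.
Qed.

Hypothesis hLC : largest_cluster_rule LC.

Lemma phi_one_edge (u v : cfg) (e : edge n d) Au Av (a : R) :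
  subconfig u v -> (forall f, v f -> f != e -> u f) ->
  admissible LC u Au -> psi R u Au = phi R LC u -> a < #|Au|%:R ->
  admissible LC v Av -> psi R v Av = phi R LC v -> a < #|Av|%:R ->
  0 < a -> 2 * #|symdiff (LC u) (LC v)|%:R <= a ->
  phi R LC v <= phi R LC u + a^-1 /\
  phi R LC u <= phi R LC v + 2 * phi R LC v * #|symdiff (LC u) (LC v)|%:R / a.
Proof.
move=> uv vu hAu psiAu Au_big hAv psiAv Av_big a0 ka.
move: ka; set k := #|symdiff (LC u) (LC v)| => ka.
have k_lt_Au : (k < #|Au|)%N by rewrite -(ltr_nat R); have := ler0n R k; lra.
have nested : LC u \subset LC v.
  apply: largest_cluster_nested hLC uv _.
  apply: leq_ltn_trans (subset_leq_card (subsetUl _ _)) _.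
  by apply: leq_trans k_lt_Au (subset_leq_card _); case/and3P: hAu.
split.
- apply: le_trans (phi_add_edge R vu nested hAu) _.
  by rewrite psiAu lerD2l lef_pV2 ?posrE ?ltW // (lt_trans a0).
- have [z hz] := (hLC u).1.
  have lost_le : (#|LC v :\: LC u| <= k)%N := subset_leq_card (subsetUr _ _).
  have lost_R : 2 * #|LC v :\: LC u|%:R <= a by apply: le_trans ka; rewrite ler_pM2l ?ler_nat.
  apply: le_trans (phi_remove_edge uv hz nested hAv psiAv _ lost_R) _.
    by rewrite a0 ltW.
  by rewrite lerD2l ler_pM2r ?invr_gt0 // ler_wpM2l ?mulr_ge0 ?phi_ge0 ?ler_nat.
Qed.

Lemma phi_flip_bound (w : cfg) (e : edge n d) A A' (a : R) :
  admissible LC w A -> psi R w A = phi R LC w -> a < #|A|%:R ->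
  admissible LC (flip w e) A' -> psi R (flip w e) A' = phi R LC (flip w e) ->
  a < #|A'|%:R -> 0 < a ->
  2 * #|symdiff (LC w) (LC (flip w e))|%:R <= a ->
  `|phi R LC w - phi R LC (flip w e)| <=
    (1 + 2 * (phi R LC w + a^-1) * #|symdiff (LC w) (LC (flip w e))|%:R) / a.
Proof.
move=> hA psiA A_big hA' psiA' A'_big a0 ka.
move: ka; set k := #|_|; set p := phi R LC w; set p' := phi R LC (flip w e) => ka.
have k0 : 0 <= k%:R :> R := ler0n R k.
have ainv0 : 0 <= a^-1 by rewrite invr_ge0 ltW.
have tail0 : 0 <= a^-1 * k%:R * a^-1 by rewrite !mulr_ge0.
have pk0 : 0 <= p * k%:R / a by rewrite !mulr_ge0 ?phi_ge0.
rewrite ler_norml; case: (boolP (w e)) => we.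
- have vu f : w f -> f != e -> flip w e f by move=> wf fe; rewrite (flip_off w fe).
  have ka' : 2 * #|symdiff (LC (flip w e)) (LC w)|%:R <= a by rewrite symdiffC.
  have [grow shrink] := phi_one_edge (flip_closed_below we) vu
    hA' psiA' A'_big hA psiA A_big a0 ka'.
  rewrite symdiffC -/k -/p -/p' in grow shrink.
  apply/andP; split; lra.
- have vu f : flip w e f -> f != e -> w f by move=> wf fe; rewrite -(flip_off w fe).
  have [grow shrink] := phi_one_edge (flip_opened_above we) vu
    hA psiA A_big hA' psiA' A'_big a0 ka.
  rewrite -/k -/p -/p' in grow shrink.
  have shift : p' * k%:R / a <= (p + a^-1) * k%:R / a.
    by rewrite ler_pM2r ?invr_gt0 // ler_wpM2r.
  apply/andP; split; lra.
Qed.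

(* Regime c n >= 2: H3 makes k = |LC w :\: LC w^e| small against c n^d and
   H2 bounds phi w by c3 / n, so the flip changes phi by O(1 / n^d). *)
Lemma phi_flip_large (w : cfg) (e : edge n d) A A' (c c3 : R) :
  (0 < n)%N -> (2 <= d)%N -> 0 < c -> 2 <= c * n%:R ->
  (#|symdiff (LC w) (LC (flip w e))| ^ 2 <= n)%N -> phi R LC w < c3 / n%:R ->
  admissible LC w A -> psi R w A = phi R LC w -> c * (n ^ d)%:R < #|A|%:R ->
  admissible LC (flip w e) A' -> psi R (flip w e) A' = phi R LC (flip w e) ->
  c * (n ^ d)%:R < #|A'|%:R ->
  `|phi R LC w - phi R LC (flip w e)| <= (1 + 2 * (c3 + c^-1)) / c / (n ^ d)%:R.
Proof.
move=> n_gt0 hd c0 large k_sq phi_upper hA psiA A_big hA' psiA' A'_big.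
move: k_sq; set k := #|_| => k_sq.
have k_le_n : (k <= n)%N.
  by apply: leq_trans k_sq; case: (k) => [|j] //; rewrite -mulnn leq_pmulr.
have n_le_N : n%:R <= (n ^ d)%:R :> R.
  by rewrite ler_nat -{1}(expn1 n) leq_pexp2l // ltnW.
have nn_le_N : n%:R * n%:R <= (n ^ d)%:R :> R.
  by rewrite -natrM mulnn ler_nat leq_pexp2l.
have k_le_nR : k%:R <= n%:R :> R by rewrite ler_nat.
have two_k : 2 * k%:R <= c * (n ^ d)%:R.
  have := ler_wpM2r (ler0n R n) large; have := ler_wpM2l (ltW c0) nn_le_N.
  lra.
apply: le_trans (phi_flip_bound hA psiA A_big hA' psiA' A'_big _ two_k) _.
  by rewrite mulr_gt0 // ltr0n expn_gt0 n_gt0.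
apply: (change_bound_large (m := n%:R)); rewrite ?ltr0n ?ler0n ?phi_ge0 //.
exact: ltW.
Qed.

(* Regime n^d <= M: both Cheeger constants lie in [0, (n^d)^2 + 1]. *)
Lemma phi_flip_small (w : cfg) (e : edge n d) (M : R) :
  (0 < n)%N -> (n ^ d)%:R <= M ->
  `|phi R LC w - phi R LC (flip w e)| <= M * (M ^+ 2 + 1) / (n ^ d)%:R.
Proof.
move=> n_gt0 N_le_M.
have N_gt0 : 0 < (n ^ d)%:R :> R by rewrite ltr0n expn_gt0 n_gt0.
have := change_bound_small N_gt0 N_le_M.
have := phi_le_torus R LC w; have := phi_le_torus R LC (flip w e).
have := phi_ge0 R LC w; have := phi_ge0 R LC (flip w e).
rewrite ler_norml; lra.
Qed.

End Perturbation.

Unset Implicit Arguments.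
Theorem claim2p3 (R : realFieldType) (d : nat) (hd : (2 <= d)%N)
    (c1 c2 c3 c4 c5 : R)
    (h1 : 0 < c1) (h2 : 0 < c2) (h3 : 0 < c3) (h4 : 0 < c4) (h5 : 0 < c5) :
  exists C : R, 0 < C /\
    forall (n : nat) (LC : config n d -> {set vtx n d}),
      (0 < n)%N -> largest_cluster_rule LC ->
      forall (w : config n d), Hn LC c1 c2 c3 c4 c5 w ->
      forall (e : edge n d),
        `|phi R LC w - phi R LC (flip w e)| <= C / (n ^ d)%:R.
Proof.
pose c := Num.min c4 c5.
have c0 : 0 < c by rewrite lt_min h4 h5.
pose C1 := (1 + 2 * (c3 + c^-1)) / c.
pose M := (2 / c) ^+ d.
have cinv_gt0 : 0 < c^-1 by rewrite invr_gt0.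
have C1_gt0 : 0 < C1 by rewrite divr_gt0 //; lra.
have M0 : 0 <= M by rewrite exprn_ge0 // divr_ge0 // ltW.
have MM0 : 0 <= M * (M ^+ 2 + 1) by rewrite mulr_ge0 // addr_ge0 // exprn_ge0.
exists (C1 + M * (M ^+ 2 + 1)); split; first lra.
move=> n LC n_gt0 hLC w [_ [_ phi_upper] hsym [A [hA A_big psiA]] hflip] e.
have [A' [hA' A'_big psiA']] := hflip e.
have N_gt0 : 0 < (n ^ d)%:R :> R by rewrite ltr0n expn_gt0 n_gt0.
have cN_le c' : c <= c' -> c * (n ^ d)%:R <= c' * (n ^ d)%:R.
  by move=> cc'; apply: ler_wpM2r cc'; apply: ltW.
have [large|small] := lerP 2 (c * n%:R).
- have A_bigc : c * (n ^ d)%:R < #|A|%:R.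
    by apply: le_lt_trans A_big; rewrite cN_le // ge_min lexx.
  have A'_bigc : c * (n ^ d)%:R < #|A'|%:R.
    by apply: le_lt_trans A'_big; rewrite cN_le // ge_min lexx orbT.
  apply: le_trans (phi_flip_large hLC n_gt0 hd c0 large (hsym e) phi_upper
    hA psiA A_bigc hA' psiA' A'_bigc) _.
  by rewrite ler_pM2r ?invr_gt0 // lerDl.
- have n_small : n%:R <= 2 / c by rewrite ler_pdivlMr // mulrC ltW.
  have N_le_M : (n ^ d)%:R <= M.
    by rewrite natrX; apply: lerXn2r; rewrite ?nnegrE ?ler0n ?divr_ge0 // ltW.
  apply: le_trans (phi_flip_small LC w e n_gt0 N_le_M) _.
  by rewrite ler_pM2r ?invr_gt0 // lerDr ltW.
Qed.
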